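(* Suppose $f\colon[0,\infty)\to[0,\infty)$ satisfies (M), (S) and (L). Then for any $\varepsilon\in(0,q_f)$ there exists $C\ge1$ such that $$C^{-1}\sigma^{\varepsilon-q_f}\le f(F^{-1}(\sigma))\le C\sigma^{-\varepsilon-q_f}\quad\text{and}\quad F^{-1}(\sigma)\le C\sigma^{1-q_f-\varepsilon}$$ for all sufficiently small $\sigma>0$.
   Context: (M) $f$ continuous, nondecreasing, $f(u)>0$ for $u>0$. (S) there is $\tau_0>0$ with $f\in C^1([\tau_0,\infty))$ and $\int_{\tau_0}^\infty ds/f(s)<\infty$. $F(u)=\int_u^\infty ds/f(s)$ for $u>0$, $F_0=\lim_{u\to0}F(u)$; $F$ is a strictly decreasing bijection $(0,\infty)\to(0,F_0)$ with inverse $F^{-1}\colon(0,F_0)\to(0,\infty)$. (L) $q_f:=\lim_{u\to\infty}f'(u)F(u)$ exists and is finite. *)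

From Stdlib Require Import Reals ClassicalEpsilon.
From Coquelicot Require Import Coquelicot.
Open Scope R_scope.

Definition Fint (f : R -> R) (u : R) : R :=
  RInt_gen (fun s => / f s) (at_point u) (Rbar_locally p_infty).

(* F^{-1}(sigma): the (unique, under (M),(S)) u > 0 with F(u) = sigma. *)
Definition Finv (f : R -> R) (sigma : R) : R :=
  epsilon (inhabits 0) (fun u => 0 < u /\ Fint f u = sigma).

Definition cond_M (f : R -> R) : Prop :=
  (forall u, 0 <= u -> 0 <= f u) /\
  (forall u, 0 < u -> continuous f u) /\
  filterlim f (at_right 0) (locally (f 0)) /\
  (forall x y, 0 <= x -> x <= y -> f x <= f y) /\
  (forall u, 0 < u -> 0 < f u).

Definition cond_S (f : R -> R) : Prop :=
  exists tau0, 0 < tau0 /\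
    (forall u, tau0 < u -> ex_derive f u /\ continuous (Derive f) u) /\
    ex_RInt_gen (fun s => / f s) (at_point tau0) (Rbar_locally p_infty).

Definition cond_L (f : R -> R) (q : R) : Prop :=
  is_lim (fun u => Derive f u * Fint f u) p_infty q.

(* Since F' = -1/f, the function f F^c has derivative F^(c-1) (f' F - c).  As f' F -> q_f,
   for large u it is nonincreasing when c = q_f + eps and nondecreasing when c = q_f - eps,
   so f(u) lies between constant multiples of F(u)^(eps - q_f) and F(u)^(-eps - q_f).
   Feeding the upper bound f <= b F^(-a), a = q_f + eps, back into F' = -1/f shows that
   u + b/(1-a) F(u)^(1-a) is nonincreasing.  This forces q_f >= 1 (otherwise u stays bounded),
   then F(u) -> 0 and u = O(F(u)^(1-a)).  Evaluating at u = F^{-1}(sigma) gives the claim. *)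

From Stdlib Require Import Reals Lra ClassicalEpsilon.
From Coquelicot Require Import Coquelicot.
Open Scope R_scope.

Lemma nonincreasing_of_is_derive_nonpos (h dh : R -> R) (U : R) :
  (forall x, U <= x -> is_derive h x (dh x)) ->
  (forall x, U <= x -> dh x <= 0) ->
  forall x y, U <= x -> x <= y -> h y <= h x.
Proof.
  intros Hd Hneg x y Hx Hxy.
  destruct (Req_dec x y) as [<-|Hne]; [lra|].
  destruct (MVT_gen h x y dh) as [c [Hc Hmvt]]; cbv zeta in *;
    rewrite ?Rmin_left, ?Rmax_right in * by lra.
  - intros z Hz. apply Hd. lra.
  - intros z Hz. apply continuity_pt_filterlim, (ex_derive_continuous h z).
    exists (dh z). apply Hd. lra.
  - assert (dh c <= 0) by (apply Hneg; lra). nra.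
Qed.

Lemma is_derive_nonneg_of_nondecreasing (g : R -> R) (x l : R) :
  (forall y, x <= y -> g x <= g y) -> is_derive g x l -> 0 <= l.
Proof.
  intros Hmono Hd. apply is_derive_Reals in Hd.
  apply Rnot_lt_le. intros Hl.
  destruct (Hd (- l)) as [d Hdel]; [lra|].
  pose proof (cond_pos d) as Hdpos.
  assert (Hquot : 0 <= (g (x + d / 2) - g x) / (d / 2)).
  { apply Rdiv_le_0_compat; [|lra]. assert (g x <= g (x + d / 2)) by (apply Hmono; lra). lra. }
  assert (Hclose : Rabs ((g (x + d / 2) - g x) / (d / 2) - l) < - l).
  { apply Hdel; [lra|]. rewrite Rabs_pos_eq; lra. }
  apply Rabs_def2 in Hclose. lra.
Qed.

Lemma Rpower_le_nonpos_exponent x y p : 0 < x <= y -> p <= 0 -> Rpower y p <= Rpower x p.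
Proof.
  intros Hxy Hp. replace p with (- (- p)) by ring. rewrite (Rpower_Ropp x), (Rpower_Ropp y).
  apply Rinv_le_contravar; [apply exp_pos|]. apply Rle_Rpower_l; lra.
Qed.

Lemma one_le_Rpower_nonpos_exponent x p : 0 < x <= 1 -> p <= 0 -> 1 <= Rpower x p.
Proof.
  intros Hx Hp. replace 1 with (Rpower 1 p) at 1
    by (unfold Rpower; rewrite ln_1, Rmult_0_r; apply exp_0).
  apply Rpower_le_nonpos_exponent; assumption.
Qed.

Section Fint_asymptotics.

Variables (f : R -> R) (qf : R).
Hypotheses (HM : cond_M f) (HS : cond_S f) (HL : cond_L f qf).

Lemma f_pos u : 0 < u -> 0 < f u.
Proof. destruct HM as [_ [_ [_ [_ Hpos]]]]. exact (Hpos u). Qed.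

Lemma f_nondecreasing x y : 0 <= x -> x <= y -> f x <= f y.
Proof. destruct HM as [_ [_ [_ [Hmono _]]]]. exact (Hmono x y). Qed.

Lemma inv_f_continuous x : 0 < x -> continuous (fun s => / f s) x.
Proof.
  intros Hx. destruct HM as [_ [Hcont _]].
  apply continuous_Rinv_comp; [exact (Hcont x Hx)|]. apply Rgt_not_eq, f_pos, Hx.
Qed.

Lemma is_derive_Fint u : 0 < u -> is_derive (Fint f) u (- / f u).
Proof.
  destruct HS as [tau0 [Htau0 [_ Hint]]].
  set (g := fun s => / f s).
  set (I0 := RInt_gen g (at_point tau0) (Rbar_locally p_infty)).
  assert (Hint_g : forall x, 0 < x -> ex_RInt g x tau0).
  { intros x Hx. apply (ex_RInt_continuous (V := R_CompleteNormedModule)).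
    intros z Hz. apply inv_f_continuous.
    assert (0 < Rmin x tau0) by (apply Rmin_glb_lt; lra). lra. }
  assert (HChasles : forall x, 0 < x -> Fint f x = RInt g x tau0 + I0).
  { intros x Hx. unfold Fint. apply is_RInt_gen_unique.
    change (RInt g x tau0 + I0) with (plus (RInt g x tau0) I0).
    apply (is_RInt_gen_Chasles (V := R_NormedModule) g tau0 _ I0).
    - apply is_RInt_gen_at_point. exact (RInt_correct g x tau0 (Hint_g x Hx)).
    - exact (RInt_gen_correct _ Hint). }
  intros Hu.
  apply is_derive_ext_loc with (fun x => RInt g x tau0 + I0).
  { apply (locally_interval _ u 0 p_infty); simpl; auto.
    intros y Hy _. symmetry. apply HChasles, Hy. }
  replace (- / f u) with (plus (opp (g u)) zero) by (unfold g, plus, opp, zero; simpl; ring).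
  apply (is_derive_plus (V := R_NormedModule) (fun x => RInt g x tau0) (fun _ => I0));
    [|exact (is_derive_const (K := R_AbsRing) (V := R_NormedModule) I0 u)].
  apply (is_derive_RInt' (V := R_CompleteNormedModule) g _ u tau0).
  - apply (locally_interval _ u 0 p_infty); simpl; auto.
    intros y Hy _. apply RInt_correct, Hint_g, Hy.
  - apply inv_f_continuous, Hu.
Qed.

Lemma Fint_nonincreasing x y : 0 < x -> x <= y -> Fint f y <= Fint f x.
Proof.
  intros Hx Hxy.
  apply (nonincreasing_of_is_derive_nonpos (Fint f) (fun u => - / f u) x); [| |lra|exact Hxy].
  - intros z Hz. apply is_derive_Fint. lra.
  - intros z Hz. assert (0 < / f z) by (apply Rinv_0_lt_compat, f_pos; lra). lra.
Qed.

Lemma Fint_continuous u : 0 < u -> continuity_pt (Fint f) u.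
Proof.
  intros Hu. apply continuity_pt_filterlim, (ex_derive_continuous (Fint f) u).
  exists (- / f u). apply is_derive_Fint, Hu.
Qed.

Lemma Derive_f_Fint_near_qf e : 0 < e <= qf ->
  exists U, 0 < U /\ forall u, U <= u ->
    ex_derive f u /\ 0 < Fint f u /\ qf - e < Derive f u * Fint f u < qf + e.
Proof.
  intros He.
  destruct HS as [tau0 [Htau0 [HC1 _]]].
  assert (Hlim := HL). apply is_lim_spec in Hlim.
  destruct (Hlim (mkposreal e (proj1 He))) as [M HMe]; simpl in HMe.
  exists (Rmax M tau0 + 1). split.
  { pose proof (Rmax_r M tau0). lra. }
  intros u Hu. pose proof (Rmax_l M tau0). pose proof (Rmax_r M tau0).
  assert (Hdf : ex_derive f u) by (apply HC1; lra).
  assert (Hnear := HMe u ltac:(lra)). apply Rabs_def2 in Hnear.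
  assert (0 <= Derive f u).
  { apply (is_derive_nonneg_of_nondecreasing f u).
    - intros y Hy. apply f_nondecreasing; lra.
    - apply Derive_correct, Hdf. }
  repeat split; [exact Hdf| |lra|lra].
  (* f' >= 0 and f' F > qf - e >= 0 force F > 0. *)
  apply Rnot_le_lt. intros HF.
  assert (Derive f u * Fint f u <= 0) by nra. lra.
Qed.

Lemma is_derive_Rpower_Fint p u : 0 < u -> 0 < Fint f u ->
  is_derive (fun x => Rpower (Fint f x) p) u (- p * Rpower (Fint f u) (p - 1) / f u).
Proof.
  intros Hu HF.
  assert (Hf := f_pos u Hu).
  assert (Hpow : is_derive (fun y => Rpower y p) (Fint f u) (p * Rpower (Fint f u) (p - 1)))
    by (apply is_derive_Reals, derivable_pt_lim_power, HF).
  replace (- p * Rpower (Fint f u) (p - 1) / f u)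
    with (scal (- / f u) (p * Rpower (Fint f u) (p - 1)))
    by (unfold scal; simpl; unfold mult; simpl; field; lra).
  exact (is_derive_comp _ _ u _ _ Hpow (is_derive_Fint u Hu)).
Qed.

Lemma is_derive_f_Rpower_Fint c u : 0 < u -> 0 < Fint f u -> ex_derive f u ->
  is_derive (fun x => f x * Rpower (Fint f x) c) u
    (Rpower (Fint f u) (c - 1) * (Derive f u * Fint f u - c)).
Proof.
  intros Hu HF Hdf.
  assert (Hf := f_pos u Hu).
  assert (Hsplit : Rpower (Fint f u) c = Rpower (Fint f u) (c - 1) * Fint f u).
  { rewrite <- (Rpower_1 (Fint f u)) at 3 by exact HF. rewrite <- Rpower_plus. f_equal. ring. }
  replace (Rpower (Fint f u) (c - 1) * (Derive f u * Fint f u - c))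
    with (Derive f u * Rpower (Fint f u) c + f u * (- c * Rpower (Fint f u) (c - 1) / f u))
    by (rewrite Hsplit; field; lra).
  apply (Derive.is_derive_mult f (fun x => Rpower (Fint f x) c)); [apply Derive_correct, Hdf|].
  apply is_derive_Rpower_Fint; assumption.
Qed.

Lemma f_Rpower_Fint_nonincreasing c U : 0 < U ->
  (forall u, U <= u -> ex_derive f u /\ 0 < Fint f u /\ Derive f u * Fint f u <= c) ->
  forall x y, U <= x -> x <= y -> f y * Rpower (Fint f y) c <= f x * Rpower (Fint f x) c.
Proof.
  intros HU Hu.
  apply (nonincreasing_of_is_derive_nonpos _
    (fun u => Rpower (Fint f u) (c - 1) * (Derive f u * Fint f u - c)) U).
  - intros x Hx. destruct (Hu x Hx) as [Hdf [HF _]]. apply is_derive_f_Rpower_Fint; auto; lra.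
  - intros x Hx. destruct (Hu x Hx) as [_ [_ Hle]].
    assert (0 < Rpower (Fint f x) (c - 1)) by apply exp_pos. nra.
Qed.

Lemma f_Rpower_Fint_nondecreasing c U : 0 < U ->
  (forall u, U <= u -> ex_derive f u /\ 0 < Fint f u /\ c <= Derive f u * Fint f u) ->
  forall x y, U <= x -> x <= y -> f x * Rpower (Fint f x) c <= f y * Rpower (Fint f y) c.
Proof.
  intros HU Hu x y Hx Hxy. apply Ropp_le_cancel. revert x y Hx Hxy.
  apply (nonincreasing_of_is_derive_nonpos _
    (fun u => - (Rpower (Fint f u) (c - 1) * (Derive f u * Fint f u - c))) U).
  - intros x Hx. destruct (Hu x Hx) as [Hdf [HF _]].
    apply (is_derive_opp (fun u => f u * Rpower (Fint f u) c)).
    apply is_derive_f_Rpower_Fint; auto; lra.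
  - intros x Hx. destruct (Hu x Hx) as [_ [_ Hle]].
    assert (0 < Rpower (Fint f x) (c - 1)) by apply exp_pos. nra.
Qed.

Lemma f_Rpower_Fint_bounds e : 0 < e <= qf ->
  exists U a b, 0 < U /\ 0 < a /\ 0 < b /\ forall u, U <= u ->
    0 < Fint f u /\
    a * Rpower (Fint f u) (e - qf) <= f u /\ f u <= b * Rpower (Fint f u) (- e - qf).
Proof.
  intros He.
  destruct (Derive_f_Fint_near_qf e He) as [U [HU Hnear]].
  assert (HFU : 0 < Fint f U) by apply (Hnear U), Rle_refl.
  assert (HfU := f_pos U HU).
  exists U, (f U * Rpower (Fint f U) (qf - e)), (f U * Rpower (Fint f U) (qf + e)).
  split; [exact HU|]. split; [apply Rmult_lt_0_compat; [lra|apply exp_pos]|].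
  split; [apply Rmult_lt_0_compat; [lra|apply exp_pos]|].
  intros u Hu. destruct (Hnear u Hu) as [_ [HF _]].
  assert (Hsplit : forall c, f u = f u * Rpower (Fint f u) c * Rpower (Fint f u) (- c)).
  { intros c. rewrite Rmult_assoc, <- Rpower_plus, Rplus_opp_r, Rpower_O by exact HF. ring. }
  assert (0 < Rpower (Fint f u) (e - qf)) by apply exp_pos.
  assert (0 < Rpower (Fint f u) (- e - qf)) by apply exp_pos.
  split; [exact HF|split].
  - rewrite (Hsplit (qf - e)). replace (- (qf - e)) with (e - qf) by ring.
    apply Rmult_le_compat_r; [lra|].
    apply (f_Rpower_Fint_nondecreasing _ U HU); [|lra|exact Hu].
    intros x Hx. destruct (Hnear x Hx) as [? [? ?]]. repeat split; auto; lra.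
  - rewrite (Hsplit (qf + e)). replace (- (qf + e)) with (- e - qf) by ring.
    apply Rmult_le_compat_r; [lra|].
    apply (f_Rpower_Fint_nonincreasing _ U HU); [|lra|exact Hu].
    intros x Hx. destruct (Hnear x Hx) as [? [? ?]]. repeat split; auto; lra.
Qed.

Lemma Fint_growth_bound a b U : a <> 1 -> 0 < U ->
  (forall u, U <= u -> 0 < Fint f u /\ f u <= b * Rpower (Fint f u) (- a)) ->
  forall u, U <= u ->
    u + b / (1 - a) * Rpower (Fint f u) (1 - a) <= U + b / (1 - a) * Rpower (Fint f U) (1 - a).
Proof.
  intros Ha HU Hbound u Hu.
  apply (nonincreasing_of_is_derive_nonpos
    (fun x => x + b / (1 - a) * Rpower (Fint f x) (1 - a))
    (fun x => plus one (b / (1 - a) * (- (1 - a) * Rpower (Fint f x) (1 - a - 1) / f x))) U);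
    [| |lra|exact Hu].
  - intros x Hx. destruct (Hbound x Hx) as [HF _].
    apply (is_derive_plus (V := R_NormedModule) (fun t => t)); [exact (is_derive_id (K := R_AbsRing) x)|].
    apply is_derive_scal, is_derive_Rpower_Fint; [lra|exact HF].
  - intros x Hx. destruct (Hbound x Hx) as [HF Hfx].
    assert (Hf := f_pos x ltac:(lra)).
    replace (1 - a - 1) with (- a) by ring.
    replace (plus one (b / (1 - a) * (- (1 - a) * Rpower (Fint f x) (- a) / f x)))
      with ((f x - b * Rpower (Fint f x) (- a)) / f x)
      by (unfold plus, one; simpl; field; split; [lra|intros H; apply Ha; lra]).
    apply Rmult_le_0_r; [lra|]. left. apply Rinv_0_lt_compat, Hf.
Qed.

Lemma one_le_qf : 0 < qf -> 1 <= qf.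
Proof.
  intros Hqf. apply Rnot_lt_le. intros Hlt.
  set (e := Rmin ((1 - qf) / 2) qf).
  assert (He : 0 < e <= qf) by (split; [apply Rmin_glb_lt; lra|apply Rmin_r]).
  assert (He1 : e <= (1 - qf) / 2) by apply Rmin_l.
  destruct (f_Rpower_Fint_bounds e He) as [U [a [b [HU [_ [Hb Hbound]]]]]].
  assert (Hgrowth := Fint_growth_bound (qf + e) b U ltac:(lra) HU).
  set (K := b / (1 - (qf + e))) in Hgrowth.
  set (k0 := U + K * Rpower (Fint f U) (1 - (qf + e))) in Hgrowth.
  assert (HK : 0 < K) by (apply Rdiv_lt_0_compat; lra).
  (* For a = qf + e < 1 both summands of the growth bound are positive, so u is bounded. *)
  set (u := Rmax U k0 + 1).
  assert (Hu : U <= u) by (pose proof (Rmax_l U k0); unfold u; lra).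
  assert (Hku : u + K * Rpower (Fint f u) (1 - (qf + e)) <= k0).
  { apply Hgrowth; [|exact Hu]. intros x Hx. destruct (Hbound x Hx) as [HF [_ Hup]].
    replace (- (qf + e)) with (- e - qf) by ring. split; assumption. }
  assert (0 < Rpower (Fint f u) (1 - (qf + e))) by apply exp_pos.
  assert (k0 < u) by (pose proof (Rmax_r U k0); unfold u; lra).
  nra.
Qed.

Lemma Fint_eventually_lt : 0 < qf -> forall U s, 0 < s -> exists u, U <= u /\ Fint f u < s.
Proof.
  intros Hqf U s Hs.
  assert (Hq1 := one_le_qf Hqf).
  destruct (f_Rpower_Fint_bounds qf (conj Hqf (Rle_refl qf))) as [U0 [a [b [HU0 [_ [Hb Hbound]]]]]].
  assert (Hgrowth := Fint_growth_bound (2 * qf) b U0 ltac:(lra) HU0).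
  set (K := b / (1 - 2 * qf)) in Hgrowth.
  set (k0 := U0 + K * Rpower (Fint f U0) (1 - 2 * qf)) in Hgrowth.
  assert (HK : K < 0).
  { unfold K, Rdiv. assert (/ (1 - 2 * qf) < 0) by (apply Rinv_lt_0_compat; lra). nra. }
  set (u := Rmax U U0 + Rmax 0 (k0 - K * Rpower s (1 - 2 * qf)) + 1).
  pose proof (Rmax_l U U0). pose proof (Rmax_r U U0).
  pose proof (Rmax_l 0 (k0 - K * Rpower s (1 - 2 * qf))).
  pose proof (Rmax_r 0 (k0 - K * Rpower s (1 - 2 * qf))).
  exists u. split; [unfold u; lra|].
  apply Rnot_le_lt. intros Hsu.
  assert (Hku : u + K * Rpower (Fint f u) (1 - 2 * qf) <= k0).
  { apply Hgrowth; [|unfold u; lra]. intros x Hx. destruct (Hbound x Hx) as [HF [_ Hup]].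
    replace (- (2 * qf)) with (- qf - qf) by ring. split; assumption. }
  assert (Rpower (Fint f u) (1 - 2 * qf) <= Rpower s (1 - 2 * qf))
    by (apply Rpower_le_nonpos_exponent; lra).
  assert (u <= k0 - K * Rpower s (1 - 2 * qf)) by nra.
  unfold u in *. lra.
Qed.

Lemma Fint_Finv U sigma : 0 < qf -> 0 < U -> 0 < sigma < Fint f U ->
  U <= Finv f sigma /\ Fint f (Finv f sigma) = sigma.
Proof.
  intros Hqf HU Hsigma.
  destruct (Fint_eventually_lt Hqf U sigma (proj1 Hsigma)) as [u1 [Hu1 Hlt]].
  assert (HUu1 : U < u1) by (destruct Hu1 as [|<-]; [assumption|lra]).
  destruct (Ranalysis5.IVT_interv (fun x => sigma - Fint f x) U u1) as [z [Hz Hzero]];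
    [|exact HUu1|cbv beta; lra|cbv beta; lra|].
  { intros x Hx. apply (continuity_pt_minus (fun _ => sigma) (Fint f)).
    - apply continuity_pt_const. intros ? ?. reflexivity.
    - apply Fint_continuous. lra. }
  cbv beta in Hzero.
  assert (Hz_sol : 0 < z /\ Fint f z = sigma) by lra.
  assert (Hspec := epsilon_spec (inhabits 0) (fun u => 0 < u /\ Fint f u = sigma)
    (ex_intro _ z Hz_sol)).
  change (0 < Finv f sigma /\ Fint f (Finv f sigma) = sigma) in Hspec.
  destruct Hspec as [Hv HFv]. split; [|exact HFv].
  apply Rnot_lt_le. intros HvU.
  assert (Fint f U <= Fint f (Finv f sigma)) by (apply Fint_nonincreasing; lra). lra.
Qed.

Lemma f_and_u_Rpower_Fint_bounds e : 0 < e <= qf ->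
  exists U C, 0 < U /\ 0 < Fint f U /\ 1 <= C /\ forall u, U <= u -> Fint f u < 1 ->
    / C * Rpower (Fint f u) (e - qf) <= f u /\
    f u <= C * Rpower (Fint f u) (- e - qf) /\
    u <= C * Rpower (Fint f u) (1 - qf - e).
Proof.
  intros He.
  assert (Hq1 := one_le_qf ltac:(lra)).
  destruct (f_Rpower_Fint_bounds e He) as [U [a [b [HU [Ha [Hb Hbound]]]]]].
  assert (Hgrowth := Fint_growth_bound (qf + e) b U ltac:(lra) HU).
  set (K := b / (1 - (qf + e))) in Hgrowth.
  set (k0 := U + K * Rpower (Fint f U) (1 - (qf + e))) in Hgrowth.
  assert (HK : K < 0).
  { unfold K, Rdiv. assert (/ (1 - (qf + e)) < 0) by (apply Rinv_lt_0_compat; lra). nra. }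
  set (C := Rmax (Rmax 1 (/ a)) (Rmax b (Rabs k0 - K))).
  assert (HC1 : 1 <= C) by (unfold C; eapply Rle_trans; [apply Rmax_l|apply Rmax_l]).
  assert (HCa : / a <= C) by (unfold C; eapply Rle_trans; [apply Rmax_r|apply Rmax_l]).
  assert (HCb : b <= C) by (unfold C; eapply Rle_trans; [apply Rmax_l|apply Rmax_r]).
  assert (HCk : Rabs k0 - K <= C) by (unfold C; eapply Rle_trans; [apply Rmax_r|apply Rmax_r]).
  exists U, C. split; [exact HU|]. split; [apply (Hbound U), Rle_refl|]. split; [exact HC1|].
  intros u Hu HF1. destruct (Hbound u Hu) as [HF [Hlow Hup]].
  assert (0 < Rpower (Fint f u) (e - qf)) by apply exp_pos.
  assert (0 < Rpower (Fint f u) (- e - qf)) by apply exp_pos.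
  split; [|split].
  - apply Rle_trans with (a * Rpower (Fint f u) (e - qf)); [|exact Hlow].
    apply Rmult_le_compat_r; [lra|].
    rewrite <- (Rinv_inv a). apply Rinv_le_contravar; [apply Rinv_0_lt_compat, Ha|exact HCa].
  - apply Rle_trans with (1 := Hup). apply Rmult_le_compat_r; lra.
  - assert (Hku : u + K * Rpower (Fint f u) (1 - (qf + e)) <= k0).
    { apply Hgrowth; [|exact Hu]. intros x Hx. destruct (Hbound x Hx) as [? [_ ?]].
      replace (- (qf + e)) with (- e - qf) by ring. split; assumption. }
    replace (1 - (qf + e)) with (1 - qf - e) in Hku by ring.
    assert (HP : 1 <= Rpower (Fint f u) (1 - qf - e))
      by (apply one_le_Rpower_nonpos_exponent; lra).
    pose proof (Rle_abs k0). pose proof (Rabs_pos k0).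
    assert (k0 <= Rabs k0 * Rpower (Fint f u) (1 - qf - e)) by nra.
    assert ((Rabs k0 - K) * Rpower (Fint f u) (1 - qf - e) <= C * Rpower (Fint f u) (1 - qf - e))
      by (apply Rmult_le_compat_r; lra).
    nra.
Qed.

End Fint_asymptotics.

Theorem lemma3p1 (f : R -> R) (qf : R) :
  cond_M f -> cond_S f -> cond_L f qf ->
  forall eps, 0 < eps < qf ->
  exists C, 1 <= C /\
    exists delta, 0 < delta /\
      forall sigma, 0 < sigma < delta ->
        / C * Rpower sigma (eps - qf) <= f (Finv f sigma) /\
        f (Finv f sigma) <= C * Rpower sigma (- eps - qf) /\
        Finv f sigma <= C * Rpower sigma (1 - qf - eps).
Proof.
  intros HM HS HL eps Heps.
  destruct (f_and_u_Rpower_Fint_bounds f qf HM HS HL eps ltac:(lra))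
    as [U [C [HU [HFU [HC Hbounds]]]]].
  exists C. split; [exact HC|].
  exists (Rmin (Fint f U) 1). split; [apply Rmin_glb_lt; lra|].
  intros sigma Hsigma.
  assert (Hsigma_U : 0 < sigma < Fint f U) by (pose proof (Rmin_l (Fint f U) 1); lra).
  assert (Hsigma_1 : sigma < 1) by (pose proof (Rmin_r (Fint f U) 1); lra).
  destruct (Fint_Finv f qf HM HS HL U sigma ltac:(lra) HU Hsigma_U) as [HUv HFv].
  assert (Hv := Hbounds (Finv f sigma) HUv). rewrite HFv in Hv. apply Hv, Hsigma_1.
Qed.
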